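(* Let $p$ be a prime, $k>0$ an integer and $q=p^k$. Let $B(X),C(X)\in\mathbb{F}_{q^3}[X]$ and $L(X)=\sum_{i=0}^r a_iX^{p^i}\in\mathbb{F}_q[X]$. Put \[ f(X)=L(X)+B(X)\circ(X^q-X)+(X^{q^2}+X^q+X)\circ C(X). \] Then $f(X)$ permutes $\mathbb{F}_{q^3}$ if and only if both of the following hold: (a) $L(X)+(X^q-X)\circ B(X)$ permutes the set $\Gamma$ of roots in $\mathbb{F}_{q^3}$ of $X^{q^2}+X^q+X$ (i.e. maps $\Gamma$ bijectively onto $\Gamma$); (b) $L(X)+(X^{q^2}+X^q+X)\circ C(X)$ is injective on $u+\mathbb{F}_q$ for every $u\in\mathbb{F}_{q^3}$.
   Context: $\circ$ denotes composition of polynomials. A polynomial permutes $\mathbb{F}_{q^3}$ if the induced map $\mathbb{F}_{q^3}\to\mathbb{F}_{q^3}$ is a bijection. *)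

From HB Require Import structures.
From mathcomp Require Import all_boot all_order all_algebra all_field.
Set Implicit Arguments. Unset Strict Implicit. Unset Printing Implicit Defensive.
Import GRing.Theory.
Local Open Scope ring_scope.

Definition in_Fq (F : finFieldType) (q : nat) (x : F) : bool := x ^+ q == x.

Definition trq (F : finFieldType) (q : nat) : {poly F} :=
  'X^(q ^ 2) + 'X^q + 'X.

Definition linpoly (F : finFieldType) (p r : nat) (a : nat -> F) : {poly F} :=
  \sum_(i < r.+1) a i *: 'X^(p ^ i).

Definition permutes_roots (F : finFieldType) (g P : {poly F}) : Prop :=
  [/\ (forall x, root P x -> root P g.[x]),
      (forall x y, root P x -> root P y -> g.[x] = g.[y] -> x = y)
    & (forall y, root P y -> exists2 x, root P x & g.[x] = y)].

From HB Require Import structures.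
From mathcomp Require Import all_boot all_order all_algebra all_field.
From mathcomp Require Import ring.

Set Implicit Arguments.
Unset Strict Implicit.
Unset Printing Implicit Defensive.

Import GRing.Theory.
Local Open Scope ring_scope.

(* Write s x = x^q, psi = s - id and tr = s^2 + s + id, so that psi and tr are
   additive, commute with L, and psi o tr = tr o psi = 0.  Then
   psi (f x) = g (psi x) with g = L + psi o B, and on a fibre u + F_q of psi,
   f = h + B (psi u) with h = L + tr o C.  By the additive Hilbert 90 the image
   of psi is exactly the root set of tr, so f is bijective iff g is injective
   on that root set and f is injective on every fibre of psi, which are (a)
   and (b). *)

Lemma exprBn_pchar (R : comNzRingType) (x y : R) n :
  [pchar R].-nat n -> (x - y) ^+ n = x ^+ n - y ^+ n.
Proof. by move=> nR; rewrite exprDn_pchar // exprNn_pchar. Qed.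

Lemma pchar_natX (R : nzRingType) p i : p \in [pchar R] -> [pchar R].-nat (p ^ i)%N.
Proof.
by move=> pR; rewrite (eq_pnat _ (pcharf_eq pR)) pnatX pnat_id ?(pcharf_prime pR).
Qed.

Lemma bijective_fibered (T U : finType) (pi : T -> U) (f : T -> T) (g : U -> U) :
    (forall x, pi (f x) = g (pi x)) ->
  bijective f <->
  {in codom pi &, injective g} /\ (forall x y, pi x = pi y -> f x = f y -> x = y).
Proof.
move=> pi_f; split=> [[f' fK f'K] | [g_inj fib_inj]].
  split=> [|x y _]; last by move=> /(can_inj fK).
  pose I := [set y in codom pi].
  have onto_I : I \subset g @: I.
    apply/subsetP=> _ /[!inE] /codomP[x ->].
    by rewrite -[x]f'K pi_f; apply: imset_f; rewrite inE codom_f.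
  have /imset_injP g_injI : #|g @: I| == #|I|.
    by rewrite eqn_leq leq_imset_card subset_leq_card.
  by move=> u v u_pi v_pi; apply: g_injI; rewrite inE.
apply: injF_bij => x y fxy; apply: (fib_inj _ _ _ fxy).
by apply: g_inj; rewrite ?codom_f // -!pi_f fxy.
Qed.

Lemma permutes_rootsE (F : finFieldType) (g P : {poly F}) :
    {homo horner g : x / root P x} ->
  permutes_roots g P <-> {in root P &, injective (horner g)}.
Proof.
move=> g_roots; split=> [[_ g_inj _] | g_inj]; first exact: g_inj.
split=> // y Py; pose R := [set x | root P x].
have /subset_cardP onto_R : #|horner g @: R| = #|R|.
  by apply: card_in_imset => x z; rewrite !inE; apply: g_inj.
have /onto_R R_onto : horner g @: R \subset R.
  by apply/subsetP=> _ /imsetP[x /[!inE] Px ->]; apply: g_roots.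
have /imsetP[x /[!inE] Px ->] : y \in horner g @: R by rewrite R_onto inE.
by exists x.
Qed.

Lemma exists_nonroot (F : finFieldType) (P : {poly F}) :
  P != 0 -> (size P <= #|F|)%N -> exists x, ~~ root P x.
Proof.
move=> nzP sizeP; apply/existsP; apply: contraR nzP => /existsPn allroots.
apply/eqP/(roots_geq_poly_eq0 (rs := enum F)); rewrite ?enum_uniq -?cardE //.
by apply/allP=> x _; apply/negPn/allroots.
Qed.

Lemma size_trq (F : finFieldType) q : (1 < q)%N -> size (trq F q) = (q ^ 2).+1.
Proof.
move=> q_gt1; have q_lt_q2 : (q < q ^ 2)%N by rewrite -mulnn ltn_Pmulr // ltnW.
by rewrite /trq -addrA size_polyDl size_polyXn // size_polyDl ?size_polyXn ?size_polyX.
Qed.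

Lemma linpolyB (F : finFieldType) p r (a : nat -> F) :
  p \in [pchar F] -> {morph horner (linpoly p r a) : x y / x - y}.
Proof.
move=> pF x y; rewrite !horner_sum -sumrB; apply: eq_bigr => i _.
by rewrite !hornerZ !hornerXn exprBn_pchar ?pchar_natX // mulrBr.
Qed.

Lemma linpoly_exp (F : finFieldType) p r (a : nat -> F) n :
    [pchar F].-nat n -> (forall i, a i ^+ n = a i) ->
  forall x, (linpoly p r a).[x ^+ n] = (linpoly p r a).[x] ^+ n.
Proof.
move=> nF a_fix x; have frob0 : 0 ^+ n = 0 :> F.
  by rewrite expr0n; case/andP: nF => /gtn_eqF ->.
rewrite !horner_sum (big_morph _ (fun y z => exprDn_pchar y z nF) frob0).
apply: eq_bigr => i _.
by rewrite !hornerZ !hornerXn exprMn a_fix -!exprM mulnC.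
Qed.

Section TraceCriterion.
Variables (F : finFieldType) (q : nat).
Hypotheses (qchar : [pchar F].-nat q) (q_gt1 : (1 < q)%N) (cardF : #|F| = (q ^ 3)%N).

Definition psi (x : F) := x ^+ q - x.
Definition tr (x : F) := x ^+ q ^+ q + x ^+ q + x.

Lemma frob3 (x : F) : x ^+ q ^+ q ^+ q = x.
Proof. by rewrite -!exprM -[RHS]expf_card cardF !expnS expn0 muln1 mulnA. Qed.

Lemma horner_trq x : (trq F q).[x] = tr x.
Proof. by rewrite /trq !hornerE -mulnn exprM. Qed.

Lemma horner_XqsubX x : ('X^q - 'X).[x] = psi x.
Proof. by rewrite !hornerE. Qed.

Lemma psiD : {morph psi : x y / x + y}.
Proof. by move=> x y; rewrite /psi exprDn_pchar //; ring. Qed.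

Lemma psiB : {morph psi : x y / x - y}.
Proof. by move=> x y; rewrite /psi exprBn_pchar //; ring. Qed.

Lemma trD : {morph tr : x y / x + y}.
Proof. by move=> x y; rewrite /tr !exprDn_pchar //; ring. Qed.

Lemma tr_psi x : tr (psi x) = 0.
Proof. by rewrite /tr /psi !exprBn_pchar // frob3; ring. Qed.

Lemma psi_tr x : psi (tr x) = 0.
Proof. by rewrite /tr /psi !exprDn_pchar // frob3; ring. Qed.

Lemma psi_eq0 x : (psi x == 0) = in_Fq q x.
Proof. by rewrite /psi subr_eq0. Qed.

Lemma exists_tr_neq0 : exists t, tr t != 0.
Proof.
have [t] : exists t, ~~ root (trq F q) t.
  apply: exists_nonroot; first by rewrite -size_poly_eq0 size_trq.
  by rewrite size_trq // cardF ltn_exp2l // ltnW.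
by rewrite /root horner_trq; exists t.
Qed.

(* Additive Hilbert 90, with the explicit preimage -(y t^q + (y + y^q) t^(q^2)) / tr t. *)
Lemma tr_eq0_psi y : tr y = 0 -> exists z, psi z = y.
Proof.
move=> try0; have [t trt] := exists_tr_neq0; set c := tr t in trt.
have frob_c : c ^+ q = c by apply/eqP; rewrite -subr_eq0; apply/eqP/psi_tr.
have frob2_y : y ^+ q ^+ q = - y ^+ q - y.
  by rewrite -[LHS]subr0 -try0 /tr; ring.
set s := y * t ^+ q + (y + y ^+ q) * t ^+ q ^+ q.
have s_frob : s - s ^+ q = y * c.
  rewrite /s exprDn_pchar // !exprMn exprDn_pchar // frob2_y frob3 /c /tr; ring.
exists (- (s / c)).
rewrite /psi exprNn_pchar // exprMn exprVn frob_c opprK addrC -mulrBl s_frob.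
exact: mulfK.
Qed.

Lemma codom_psi : codom psi =i root (trq F q).
Proof.
move=> y; rewrite [y \in root _]inE horner_trq.
apply/codomP/eqP=> [[x ->] | /tr_eq0_psi[x <-]].
  exact: tr_psi.
by exists x.
Qed.

Variables (L B C : {poly F}).
Hypotheses (L_sub : {morph horner L : x y / x - y})
  (L_frob : forall x, L.[x ^+ q] = L.[x] ^+ q).

Local Notation f := (L + (B \Po ('X^q - 'X)) + (trq F q \Po C)).
Local Notation g := (L + (('X^q - 'X) \Po B)).
Local Notation h := (L + (trq F q \Po C)).

Lemma hornerL0 : L.[0] = 0.
Proof. by have := L_sub 0 0; rewrite !subrr. Qed.

Lemma hornerLD : {morph horner L : x y / x + y}.
Proof.
have LN x : L.[- x] = - L.[x] by rewrite -sub0r L_sub hornerL0 sub0r.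
by move=> x y; rewrite -[y]opprK L_sub !LN opprK.
Qed.

Lemma hornerL_psi x : L.[psi x] = psi L.[x].
Proof. by rewrite /psi L_sub L_frob. Qed.

Lemma hornerL_tr x : L.[tr x] = tr L.[x].
Proof. by rewrite /tr !hornerLD !L_frob. Qed.

Lemma horner_g_root y : root (trq F q) y -> root (trq F q) g.[y].
Proof.
rewrite /root !horner_trq hornerD horner_comp horner_XqsubX => /eqP try0.
by rewrite trD tr_psi addr0 -hornerL_tr try0 hornerL0.
Qed.

Lemma psi_horner_f x : psi f.[x] = g.[psi x].
Proof.
rewrite !hornerD !horner_comp horner_trq !horner_XqsubX psiD psi_tr addr0.
by rewrite psiD hornerL_psi.
Qed.

Lemma horner_f_fiber u s : psi s = 0 -> f.[u + s] = h.[u + s] + B.[psi u].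
Proof.
move=> psi_s; rewrite !hornerD !horner_comp horner_trq horner_XqsubX psiD psi_s.
by rewrite addr0 addrAC -addrA.
Qed.

Lemma fiber_injective_horner_f :
  (forall x y, psi x = psi y -> f.[x] = f.[y] -> x = y) <->
  (forall u x y, in_Fq q x -> in_Fq q y -> h.[u + x] = h.[u + y] -> x = y).
Proof.
split=> [f_inj u x y | h_inj x y psi_xy fxy].
  rewrite -!psi_eq0 => /eqP psi_x /eqP psi_y hxy; apply: (addrI u); apply: f_inj.
    by rewrite !psiD psi_x psi_y.
  by rewrite !horner_f_fiber // hxy.
have psi_xy0 : psi (x - y) = 0 by rewrite psiB psi_xy subrr.
have psi0 : psi 0 = 0 by rewrite /psi expr0n gtn_eqF ?subrr // ltnW.
apply/eqP; rewrite -subr_eq0; apply/eqP/(h_inj y); rewrite -?psi_eq0 ?psi_xy0 ?psi0 //.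
apply: (addIr B.[psi y]); rewrite -!horner_f_fiber //.
by rewrite subrKC addr0.
Qed.

Theorem trace_permutation_criterion :
  bijective (horner f) <->
  permutes_roots g (trq F q) /\
  (forall u x y, in_Fq q x -> in_Fq q y -> h.[u + x] = h.[u + y] -> x = y).
Proof.
split=> [/(bijective_fibered psi_horner_f) [g_inj f_inj] | [g_perm h_inj]].
  split; last exact/fiber_injective_horner_f.
  apply/(permutes_rootsE horner_g_root).
  by apply: sub_in2 g_inj => y; rewrite codom_psi.
apply/(bijective_fibered psi_horner_f); split; last exact/fiber_injective_horner_f.
have /(permutes_rootsE horner_g_root) g_inj := g_perm.
by apply: sub_in2 g_inj => y; rewrite codom_psi.
Qed.

End TraceCriterion.

Theorem lemma3p1 (p k : nat) (F : finFieldType)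
  (hp : prime p) (hk : (0 < k)%N) (hF : #|F| = ((p ^ k) ^ 3)%N)
  (B C : {poly F}) (r : nat) (a : nat -> F)
  (ha : forall i, in_Fq (p ^ k) (a i)) :
  let q := (p ^ k)%N in
  let L := linpoly p r a in
  let f := L + (B \Po ('X^q - 'X)) + (trq F q \Po C) in
  bijective (fun x : F => f.[x]) <->
  (permutes_roots (L + (('X^q - 'X) \Po B)) (trq F q) /\
   (forall u x y : F, in_Fq q x -> in_Fq q y ->
      (L + (trq F q \Po C)).[u + x] = (L + (trq F q \Po C)).[u + y] -> x = y)).
Proof.
move=> q L f.
have pF : p \in [pchar F] by apply: (card_finPcharP (n := k * 3)); rewrite // hF expnM.
have q_gt1 : (1 < q)%N by rewrite -{1}(expn0 p) ltn_exp2l ?prime_gt1.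
have a_fix i : a i ^+ q = a i by apply/eqP/ha.
have qchar : [pchar F].-nat q := pchar_natX k pF.
exact: (trace_permutation_criterion qchar q_gt1 hF B C
  (linpolyB r a pF) (linpoly_exp p r qchar a_fix)).
Qed.
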